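(* On bipartite graphs, each of GVC, GVC1 and GVC2 is equivalent to the bipartite unconstrained 0-1 quadratic programming problem BQP01: every instance of one can be formulated as an instance of the other such that an optimal solution of the new instance yields an optimal solution of the original (identifying $U_1\subseteq V_1$, $U_2\subseteq V_2$ with incidence vectors $x\in\{0,1\}^m$, $y\in\{0,1\}^n$).
   Context: Let $G=(V_1,V_2,E)$ be a bipartite graph with $V_1=\{1,\dots,m\}$, $V_2=\{1,\dots,n\}$ and every edge $(i,j)$ having $i\in V_1$, $j\in V_2$. Vertices $i\in V_1$ have weights $c_i$, vertices $j\in V_2$ have weights $d_j$, and each edge has real weights $q^0_{ij},q^1_{ij},q^2_{ij}$. For $U_1\subseteq V_1$, $U_2\subseteq V_2$ let $E_0(U_1,U_2)=\{(i,j)\in E: i\notin U_1, j\notin U_2\}$, $E_1(U_1,U_2)$ the edges with exactly one of $i\in U_1$, $j\in U_2$, and $E_2(U_1,U_2)=\{(i,j)\in E: i\in U_1,j\in U_2\}$. GVC on $G$ minimizes $\sum_{i\in U_1}c_i+\sum_{j\in U_2}d_j+\sum_{E_0}q^0_{ij}+\sum_{E_1}q^1_{ij}+\sum_{E_2}q^2_{ij}$ over $U_1\subseteq V_1,U_2\subseteq V_2$; GVC1 is the special case $q^1\equiv q^2\equiv 0$; GVC2 is the special case $q^0\equiv q^1\equiv 0$. BQP01: given a real $m\times n$ matrix $Q=(q_{ij})$, $a\in\mathbb{R}^m$, $b\in\mathbb{R}^n$, minimize $\sum_i a_ix_i+\sum_j b_jy_j+\sum_{i,j}q_{ij}x_iy_j$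 over $x\in\{0,1\}^m$, $y\in\{0,1\}^n$. Two problems are equivalent if each can be formulated as the other so that an optimal solution of the formulated instance gives an optimal solution of the original. *)

From mathcomp Require Import all_boot all_order all_algebra.
Set Implicit Arguments. Unset Strict Implicit. Unset Printing Implicit Defensive.
Import Order.TTheory GRing.Theory Num.Theory.
Local Open Scope ring_scope.

(* Bipartite graph G = (V1, V2, E): V1 = 'I_m, V2 = 'I_n (i.e. {1..m}, {1..n}
   shifted to {0..m-1}, {0..n-1}), and E a set of pairs (i,j), i in V1, j in V2. *)

Section Defs.
Variables (R : realFieldType) (m n : nat).

Definition gvc_obj (E : {set 'I_m * 'I_n}) (c : 'I_m -> R) (d : 'I_n -> R)
  (q0 q1 q2 : 'I_m -> 'I_n -> R) (U1 : {set 'I_m}) (U2 : {set 'I_n}) : R :=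
  \sum_(i in U1) c i + \sum_(j in U2) d j
  + \sum_(e in E | (e.1 \notin U1) && (e.2 \notin U2)) q0 e.1 e.2
  + \sum_(e in E | (e.1 \in U1) (+) (e.2 \in U2)) q1 e.1 e.2
  + \sum_(e in E | (e.1 \in U1) && (e.2 \in U2)) q2 e.1 e.2.

Definition gvc_opt E c d q0 q1 q2 (U1 : {set 'I_m}) (U2 : {set 'I_n}) : Prop :=
  forall (V1 : {set 'I_m}) (V2 : {set 'I_n}),
    gvc_obj E c d q0 q1 q2 U1 U2 <= gvc_obj E c d q0 q1 q2 V1 V2.

Definition bqp_obj (Q : 'M[R]_(m, n)) (a : 'I_m -> R) (b : 'I_n -> R)
  (x : 'I_m -> bool) (y : 'I_n -> bool) : R :=
  \sum_i a i * (x i)%:R + \sum_j b j * (y j)%:R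
  + \sum_i \sum_j Q i j * (x i)%:R * (y j)%:R.

Definition bqp_opt Q a b (x : 'I_m -> bool) (y : 'I_n -> bool) : Prop :=
  forall (x' : 'I_m -> bool) (y' : 'I_n -> bool),
    bqp_obj Q a b x y <= bqp_obj Q a b x' y'.

End Defs.

Definition incid (k : nat) (U : {set 'I_k}) : 'I_k -> bool := fun i => i \in U.

Variant gvc_kind := GVC | GVC1 | GVC2.

Definition in_class (R : realFieldType) (m n : nat) (k : gvc_kind)
  (q0 q1 q2 : 'I_m -> 'I_n -> R) : Prop :=
  match k with
  | GVC => True
  | GVC1 => forall i j, q1 i j = 0 /\ q2 i j = 0
  | GVC2 => forall i j, q0 i j = 0 /\ q1 i j = 0
  end.

Definition gvc_formulated_as_bqp (R : realFieldType) (k : gvc_kind) : Prop :=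
  forall (m n : nat) (E : {set 'I_m * 'I_n}) (c : 'I_m -> R) (d : 'I_n -> R)
         (q0 q1 q2 : 'I_m -> 'I_n -> R),
  in_class k q0 q1 q2 ->
  exists (Q : 'M[R]_(m, n)) (a : 'I_m -> R) (b : 'I_n -> R) (K : R),
    (forall U1 U2, bqp_obj Q a b (incid U1) (incid U2)
                   = gvc_obj E c d q0 q1 q2 U1 U2 + K) /\
    (forall U1 U2, bqp_opt Q a b (incid U1) (incid U2) ->
                   gvc_opt E c d q0 q1 q2 U1 U2).

Definition bqp_formulated_as_gvc (R : realFieldType) (k : gvc_kind) : Prop :=
  forall (m n : nat) (Q : 'M[R]_(m, n)) (a : 'I_m -> R) (b : 'I_n -> R),
  exists (E : {set 'I_m * 'I_n}) (c : 'I_m -> R) (d : 'I_n -> R)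
         (q0 q1 q2 : 'I_m -> 'I_n -> R) (K : R),
    in_class k q0 q1 q2 /\
    (forall U1 U2, gvc_obj E c d q0 q1 q2 U1 U2
                   = bqp_obj Q a b (incid U1) (incid U2) + K) /\
    (forall U1 U2, gvc_opt E c d q0 q1 q2 U1 U2 ->
                   bqp_opt Q a b (incid U1) (incid U2)).

Definition equivalent_to_bqp (R : realFieldType) (k : gvc_kind) : Prop :=
  gvc_formulated_as_bqp R k /\ bqp_formulated_as_gvc R k.

From mathcomp Require Import all_boot all_order all_algebra ring lra.
Set Implicit Arguments. Unset Strict Implicit. Unset Printing Implicit Defensive.
Import Order.TTheory GRing.Theory Num.Theory.
Local Open Scope ring_scope.

(** On an edge with endpoint indicators x, y the GVC cost is
    q0 + (q1 - q0)(x + y) + (q0 - 2 q1 + q2) x y, so, after extending E to the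
    complete bipartite graph with zero weights, the GVC objective is a BQP01
    objective plus a constant.  Conversely, a BQP01 instance is the GVC2 instance
    with q2 = Q, and, since x y = (1 - x)(1 - y) - 1 + x + y, the GVC1 instance
    with q0 = Q once the row and column sums of Q are moved into the vertex
    weights. *)

Section Reformulation.
Variables (R : realFieldType) (m n : nat).
Implicit Types (E : {set 'I_m * 'I_n}) (c a : 'I_m -> R) (d b : 'I_n -> R).
Implicit Types (q : 'I_m -> 'I_n -> R) (Q : 'M[R]_(m, n)).
Local Notation weights := ('I_m -> 'I_n -> R).

Definition edge_cost (w0 w1 w2 : R) (x y : bool) : R :=
  match x, y with
  | false, false => w0
  | true, true => w2
  | _, _ => w1
  end.

Lemma edge_costE w0 w1 w2 (x y : bool) :
  edge_cost w0 w1 w2 x y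
  = w0 + (w1 - w0) * x%:R + (w1 - w0) * y%:R + (w0 - 2 * w1 + w2) * x%:R * y%:R.
Proof. by case: x; case: y => /=; ring. Qed.

Lemma gvc_objE E c d (q0 q1 q2 : weights) (U1 : {set 'I_m}) (U2 : {set 'I_n}) :
  gvc_obj E c d q0 q1 q2 U1 U2 =
  \sum_(i in U1) c i + \sum_(j in U2) d j
  + \sum_(e in E)
      edge_cost (q0 e.1 e.2) (q1 e.1 e.2) (q2 e.1 e.2) (e.1 \in U1) (e.2 \in U2).
Proof.
rewrite /gvc_obj -!addrA; congr (_ + (_ + _)).
rewrite !big_mkcondr -!big_split /=; apply: eq_bigr => e _.
by case: (e.1 \in U1); case: (e.2 \in U2); rewrite /= ?addr0 ?add0r.
Qed.

Definition restrict E q : 'I_m -> 'I_n -> R :=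
  fun i j => if (i, j) \in E then q i j else 0.

Lemma gvc_obj_restrict E c d (q0 q1 q2 : weights)
    (U1 : {set 'I_m}) (U2 : {set 'I_n}) :
  gvc_obj E c d q0 q1 q2 U1 U2
  = gvc_obj [set: 'I_m * 'I_n] c d
      (restrict E q0) (restrict E q1) (restrict E q2) U1 U2.
Proof.
rewrite !gvc_objE; congr (_ + _).
rewrite big_mkcond [RHS](eq_bigl xpredT) => [|e]; last by rewrite in_setT.
apply: eq_bigr => -[i j] _; rewrite /restrict /=.
by case: ((i, j) \in E) => //; case: (i \in U1); case: (j \in U2).
Qed.

Lemma sum_incid k (F : 'I_k -> R) (U : {set 'I_k}) :
  \sum_i F i * (incid U i)%:R = \sum_(i in U) F i.
Proof.
rewrite [RHS]big_mkcond; apply: eq_bigr => i _.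
by rewrite /incid; case: (i \in U); rewrite ?mulr1 ?mulr0.
Qed.

Lemma gvc_obj_complete_as_bqp c d (q0 q1 q2 : weights) Q a b
    (U1 : {set 'I_m}) (U2 : {set 'I_n}) :
  (forall i j, Q i j = q0 i j - 2 * q1 i j + q2 i j) ->
  (forall i, a i = c i + \sum_j (q1 i j - q0 i j)) ->
  (forall j, b j = d j + \sum_i (q1 i j - q0 i j)) ->
  gvc_obj [set: 'I_m * 'I_n] c d q0 q1 q2 U1 U2
  = bqp_obj Q a b (incid U1) (incid U2) + \sum_i \sum_j q0 i j.
Proof.
move=> hQ ha hb.
have edges : \sum_(e in [set: 'I_m * 'I_n])
    edge_cost (q0 e.1 e.2) (q1 e.1 e.2) (q2 e.1 e.2) (e.1 \in U1) (e.2 \in U2)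
  = \sum_i \sum_j q0 i j
    + \sum_i (\sum_j (q1 i j - q0 i j)) * (incid U1 i)%:R
    + \sum_j (\sum_i (q1 i j - q0 i j)) * (incid U2 j)%:R
    + \sum_i \sum_j Q i j * (incid U1 i)%:R * (incid U2 j)%:R.
  rewrite (eq_bigl xpredT) => [|e]; last by rewrite in_setT.
  rewrite -(pair_bigA _ (fun i j =>
    edge_cost (q0 i j) (q1 i j) (q2 i j) (i \in U1) (j \in U2))) /=.
  under [X in _ + X + _ + _]eq_bigr do rewrite mulr_suml.
  under [X in _ + _ + X + _]eq_bigr do rewrite mulr_suml.
  rewrite [X in _ + _ + X + _]exchange_big -!big_split /=; apply: eq_bigr => i _.
  rewrite -!big_split /=; apply: eq_bigr => j _.
  by rewrite edge_costE hQ.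
rewrite gvc_objE edges /bqp_obj.
under [\sum_i a i * _]eq_bigr do rewrite ha mulrDl.
under [\sum_j b j * _]eq_bigr do rewrite hb mulrDl.
rewrite !big_split /= !sum_incid; lra.
Qed.

Lemma eq_bqp_obj Q a b (x x' : 'I_m -> bool) (y y' : 'I_n -> bool) :
  x =1 x' -> y =1 y' -> bqp_obj Q a b x y = bqp_obj Q a b x' y'.
Proof.
move=> ex ey; rewrite /bqp_obj.
by congr (_ + _ + _); do 2?[apply: eq_bigr => ? _]; rewrite ?ex ?ey.
Qed.

Lemma incid_set k (x : 'I_k -> bool) : incid [set i | x i] =1 x.
Proof. by move=> i; rewrite /incid inE. Qed.

Lemma gvc_opt_of_bqp_opt E c d (q0 q1 q2 : weights) Q a b (K : R) :
  (forall U1 U2,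
     bqp_obj Q a b (incid U1) (incid U2) = gvc_obj E c d q0 q1 q2 U1 U2 + K) ->
  forall U1 U2, bqp_opt Q a b (incid U1) (incid U2) -> gvc_opt E c d q0 q1 q2 U1 U2.
Proof.
by move=> hK U1 U2 opt V1 V2; have := opt (incid V1) (incid V2); rewrite !hK lerD2r.
Qed.

Lemma bqp_opt_of_gvc_opt E c d (q0 q1 q2 : weights) Q a b (K : R) :
  (forall U1 U2,
     gvc_obj E c d q0 q1 q2 U1 U2 = bqp_obj Q a b (incid U1) (incid U2) + K) ->
  forall U1 U2, gvc_opt E c d q0 q1 q2 U1 U2 -> bqp_opt Q a b (incid U1) (incid U2).
Proof.
move=> hK U1 U2 opt x y; have := opt [set i | x i] [set j | y j].
by rewrite !hK lerD2r (eq_bqp_obj _ _ _ (incid_set x) (incid_set y)).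
Qed.

End Reformulation.

Lemma every_gvc_formulated_as_bqp (R : realFieldType) k : gvc_formulated_as_bqp R k.
Proof.
move=> m n E c d q0 q1 q2 _.
pose p0 := restrict E q0; pose p1 := restrict E q1; pose p2 := restrict E q2.
pose Q := \matrix_(i, j) (p0 i j - 2 * p1 i j + p2 i j) : 'M[R]_(m, n).
pose a i := c i + \sum_j (p1 i j - p0 i j).
pose b j := d j + \sum_i (p1 i j - p0 i j).
have hK U1 U2 : bqp_obj Q a b (incid U1) (incid U2)
    = gvc_obj E c d q0 q1 q2 U1 U2 - \sum_i \sum_j p0 i j.
  rewrite gvc_obj_restrict (gvc_obj_complete_as_bqp (Q := Q) (a := a) (b := b)).
  - by rewrite addrK.
  - by move=> i j; rewrite mxE.
  - by [].
  - by [].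
exists Q, a, b, (- \sum_i \sum_j p0 i j); split=> //.
exact: gvc_opt_of_bqp_opt hK.
Qed.

Lemma bqp_formulated_as_gvc2 (R : realFieldType) : bqp_formulated_as_gvc R GVC2.
Proof.
move=> m n Q a b.
pose z : 'I_m -> 'I_n -> R := fun _ _ => 0.
have hK U1 U2 : gvc_obj [set: 'I_m * 'I_n] a b z z Q U1 U2
    = bqp_obj Q a b (incid U1) (incid U2) + \sum_i \sum_j z i j.
  apply: gvc_obj_complete_as_bqp => [i j|i|j]; rewrite /z.
  - by rewrite mulr0 subr0 add0r.
  - by rewrite big1 ?addr0 // => j _; rewrite subrr.
  - by rewrite big1 ?addr0 // => i _; rewrite subrr.
exists [set: 'I_m * 'I_n], a, b, z, z, Q, (\sum_i \sum_j z i j).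
by split; [|split; [|exact: bqp_opt_of_gvc_opt hK]].
Qed.

Lemma bqp_formulated_as_gvc1 (R : realFieldType) : bqp_formulated_as_gvc R GVC1.
Proof.
move=> m n Q a b.
pose z : 'I_m -> 'I_n -> R := fun _ _ => 0.
pose c i := a i + \sum_j Q i j.
pose d j := b j + \sum_i Q i j.
have hK U1 U2 : gvc_obj [set: 'I_m * 'I_n] c d Q z z U1 U2
    = bqp_obj Q a b (incid U1) (incid U2) + \sum_i \sum_j Q i j.
  apply: gvc_obj_complete_as_bqp => [i j|i|j]; rewrite /z /c /d.
  - by rewrite mulr0 subr0 addr0.
  - by rewrite -addrA -big_split big1 ?addr0 // => j _ /=; rewrite sub0r addrN.
  - by rewrite -addrA -big_split big1 ?addr0 // => i _ /=; rewrite sub0r addrN.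
exists [set: 'I_m * 'I_n], c, d, Q, z, z, (\sum_i \sum_j Q i j).
by split; [|split; [|exact: bqp_opt_of_gvc_opt hK]].
Qed.

Theorem theorem4 (R : realFieldType) :
  equivalent_to_bqp R GVC /\ equivalent_to_bqp R GVC1 /\ equivalent_to_bqp R GVC2.
Proof.
have bqp_as_gvc : bqp_formulated_as_gvc R GVC.
  move=> m n Q a b.
  have [E [c [d [q0 [q1 [q2 [K [_ h]]]]]]]] := bqp_formulated_as_gvc2 Q a b.
  by exists E, c, d, q0, q1, q2, K.
do !split; try exact: every_gvc_formulated_as_bqp.
- exact: bqp_as_gvc.
- exact: bqp_formulated_as_gvc1.
- exact: bqp_formulated_as_gvc2.
Qed.
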